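(* Let $R$ be a reflexive relation on $U$ and $x\in U$. (i) If $x\notin\mathcal S$ and $\{x\}^{\blacktriangle}$ is completely join-irreducible in $\wp(U)^{\blacktriangle}$, then $(\{x\}^{\blacktriangledown},\{x\}^{\blacktriangle})$ is completely join-irreducible in $\mathrm{DM(RS)}$. (ii) If $\{x\}^{\vartriangle}$ is completely join-irreducible in $\wp(U)^{\vartriangle}$, then $(\{x\}^{\vartriangle\blacktriangledown},\{x\}^{\vartriangle\blacktriangle})$ is completely join-irreducible in $\mathrm{DM(RS)}$.
   Context: Let $U$ be a set and $R\subseteq U\times U$ a binary relation. For $x\in U$, $R(x)=\{y\in U\mid (x,y)\in R\}$ and $\breve R(x)=\{y\in U\mid (y,x)\in R\}$. For $X\subseteq U$: $X^{\blacktriangledown}=\{x\in U\mid R(x)\subseteq X\}$, $X^{\blacktriangle}=\{x\in U\mid R(x)\cap X\neq\emptyset\}$, $X^{\triangledown}=\{x\in U\mid \breve R(x)\subseteq X\}$, $X^{\vartriangle}=\{x\in U\mid \breve R(x)\cap X\neq\emptyset\}$; composites like $X^{\vartriangle\blacktriangledown}$ mean $(X^{\vartriangle})^{\blacktriangledown}$. $\wp(U)^{\blacktriangledown}=\{X^{\blacktriangledown}\mid X\subseteq U\}$ and similarly $\wp(U)^{\blacktriangle},\wp(U)^{\vartriangle}$, complete lattices under $\subseteq$ (joins in $\wp(U)^{\blacktriangle},\wp(U)^{\vartriangle}$ are unions). $\mathcal S=\{x\in U\mid |R(x)|=1\}$. $\mathrm{RS}=\{(X^{\blacktriangledown},X^{\blacktriangle})\mid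 X\subseteq U\}$ ordered coordinatewise; $\mathrm{DM(RS)}$ is its Dedekind–MacNeille completion, identified with $\{(A,B)\in\wp(U)^{\blacktriangledown}\times\wp(U)^{\blacktriangle}\mid A^{\vartriangle\blacktriangle}\subseteq B,\ A\cap\mathcal S=B\cap\mathcal S\}$ ordered coordinatewise, with meets $\bigwedge_i(X_i,Y_i)=(\bigcap_iX_i,(\bigcap_iY_i)^{\triangledown\blacktriangle})$ and joins $\bigvee_i(X_i,Y_i)=((\bigcup_iX_i)^{\vartriangle\blacktriangledown},\bigcup_iY_i)$. An element $j$ of a complete lattice $L$ is completely join-irreducible if $j=\bigvee S$ implies $j\in S$ for every $S\subseteq L$. *)

From mathcomp Require Import all_boot.
From mathcomp Require Import boolp classical_sets.
Set Implicit Arguments. Unset Strict Implicit. Unset Printing Implicit Defensive.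
Local Open Scope classical_set_scope.

Section RoughSets.
Variable T : Type.
Variable R : T -> T -> Prop.

Definition Rimg (x : T) : set T := [set y | R x y].
Definition Rinv (x : T) : set T := [set y | R y x].

(* X^{blacktriangledown}, X^{blacktriangle}, X^{triangledown}, X^{vartriangle} *)
Definition boxB (X : set T) : set T := [set x | Rimg x `<=` X].
Definition diaB (X : set T) : set T := [set x | Rimg x `&` X !=set0].
Definition boxW (X : set T) : set T := [set x | Rinv x `<=` X].
Definition diaW (X : set T) : set T := [set x | Rinv x `&` X !=set0].

Definition singR : set T := [set x | exists y, Rimg x = [set y]].

(* DM(RS), identified with the set of pairs described in the paper *)
Definition DMRS : set (set T * set T) :=
  [set p | range boxB p.1 /\ range diaB p.2 /\
           diaB (diaW p.1) `<=` p.2 /\ p.1 `&` singR = p.2 `&` singR].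
End RoughSets.

Definition set_le (T : Type) (A B : set T) : Prop := A `<=` B.
Definition pair_le (T : Type) (p q : set T * set T) : Prop :=
  p.1 `<=` q.1 /\ p.2 `<=` q.2.

Definition is_lub (X : Type) (le : X -> X -> Prop) (L : set X) (S : set X) (j : X) :=
  L j /\ (forall s, S s -> le s j) /\
  (forall u, L u -> (forall s, S s -> le s u) -> le j u).

Definition compl_join_irr (X : Type) (le : X -> X -> Prop) (L : set X) (j : X) :=
  L j /\ forall S : set X, S `<=` L -> is_lub le L S j -> S j.

From mathcomp Require Import all_boot.
From mathcomp Require Import boolp classical_sets.
Local Open Scope classical_set_scope.

(* Both parts transfer irreducibility along a projection of DM(RS). If j is
   the join in DM(RS) of a family S, then the projected family ({p.2} in (i),
   {p.1^▵} in (ii)) has the projection of j as its join: an upper bound of the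
   projected family lifts to an element of DM(RS) above S. In (i) the lift of
   Y^▲ is simply the rough set (Y^▼, Y^▲), because {x}^▼ is empty when R is
   reflexive and |R(x)| ≠ 1. Irreducibility of the projection of j then yields some
   p in S with the same projection, and the Galois connections ▵ ⊣ ▼ and
   ▲ ⊣ ▽ force p = j. *)

Lemma pair_le_anti (T : Type) (p q : set T * set T) :
  pair_le p q -> pair_le q p -> p = q.
Proof.
case: p q => [A B] [C D] [/= AC BD] [/= CA DB].
by congr pair; rewrite eqEsubset.
Qed.

Section RoughApproximations.
Variables (T : Type) (R : T -> T -> Prop).
Implicit Types (X Y U : set T) (p : set T * set T).

Lemma diaW_subsetP X Y : diaW R X `<=` Y <-> X `<=` boxB R Y.
Proof.
split=> [h y Xy z Ryz | h z [y [Ryz Xy]]]; last exact: h _ Xy _ Ryz.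
by apply: h; exists y.
Qed.

Lemma diaB_subsetP X Y : diaB R X `<=` Y <-> X `<=` boxW R Y.
Proof.
split=> [h y Xy z Rzy | h z [y [Rzy Xy]]]; last exact: h _ Xy _ Rzy.
by apply: h; exists y.
Qed.

Lemma subset_boxB_diaW X : X `<=` boxB R (diaW R X).
Proof. exact/diaW_subsetP. Qed.

Lemma diaW_boxB_subset Y : diaW R (boxB R Y) `<=` Y.
Proof. exact/diaW_subsetP. Qed.

Lemma subset_boxW_diaB X : X `<=` boxW R (diaB R X).
Proof. exact/diaB_subsetP. Qed.

Lemma diaB_boxW_subset Y : diaB R (boxW R Y) `<=` Y.
Proof. exact/diaB_subsetP. Qed.

Lemma boxB_subset {X Y} : X `<=` Y -> boxB R X `<=` boxB R Y.
Proof. by move=> XY z Xz w /Xz /XY. Qed.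

Lemma diaB_subset {X Y} : X `<=` Y -> diaB R X `<=` diaB R Y.
Proof. by move=> XY z [w [Rzw /XY Yw]]; exists w. Qed.

Lemma boxB_diaW_boxB Y : boxB R (diaW R (boxB R Y)) = boxB R Y.
Proof.
rewrite eqEsubset; split; last exact: subset_boxB_diaW.
exact: boxB_subset (diaW_boxB_subset _).
Qed.

Lemma diaB_boxW_diaB Y : diaB R (boxW R (diaB R Y)) = diaB R Y.
Proof.
rewrite eqEsubset; split; first exact: diaB_boxW_subset.
exact: diaB_subset (subset_boxW_diaB _).
Qed.

Lemma boxB_singR {s t} Y : Rimg R s = [set t] -> boxB R Y s <-> Y t.
Proof. by move=> st; rewrite /boxB /= st; split=> [/(_ t erefl) | Yt _ ->]. Qed.

Lemma diaB_singR {s t} Y : Rimg R s = [set t] -> diaB R Y s <-> Y t.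
Proof.
move=> st; rewrite /diaB /= st.
by split=> [[_ [-> //]] | Yt]; exists t.
Qed.

Lemma boxB_diaB_singR Y : boxB R Y `&` singR R = diaB R Y `&` singR R.
Proof.
rewrite eqEsubset; split=> s [Ys [t st]]; (split; last by exists t).
  exact/(diaB_singR _ st)/(boxB_singR _ st).
exact/(boxB_singR _ st)/(diaB_singR _ st).
Qed.

Lemma DMRS_boxB_diaB Y : DMRS R (boxB R Y, diaB R Y).
Proof.
split; first by exists Y.
split; first by exists Y.
split; last exact: boxB_diaB_singR.
exact: diaB_subset (diaW_boxB_subset _).
Qed.

(* An element of DM(RS) above S whenever U bounds all p.1^▵. Its second
   component is (∪ p.2) ∪ U^▲, written as one ▲ since p.2 = (p.2^▽)^▲; the
   summand U^▲ makes the two components agree on singR. *)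
Definition DMRS_ub (S : set (set T * set T)) U : set T * set T :=
  (boxB R U, diaB R (\bigcup_(p in S) boxW R p.2 `|` U)).

Section UpperBound.
Context {S : set (set T * set T)} {U : set T}.
Hypothesis SDM : S `<=` DMRS R.
Hypothesis diaW_S_U : forall p, S p -> diaW R p.1 `<=` U.

Lemma DMRS_ub_ge p : S p -> pair_le p (DMRS_ub S U).
Proof.
move=> Sp; rewrite /DMRS_ub; split=> /=.
  exact: subset_trans (subset_boxB_diaW _) (boxB_subset (diaW_S_U _ Sp)).
have [_ [[Y _ YE] _]] := SDM _ Sp.
rewrite -YE -diaB_boxW_diaB; apply: diaB_subset => z Yz.
by left; exists p; rewrite // -YE.
Qed.

Lemma DMRS_ub_in : DMRS R (DMRS_ub S U).
Proof.
rewrite /DMRS_ub.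
split; first by exists U.
split; first by eexists.
split=> /=.
  by apply: diaB_subset => z /diaW_boxB_subset Uz; right.
rewrite eqEsubset; split=> s [Ys [t st]]; (split; last by exists t).
  by apply/(diaB_singR _ st); right; apply/(boxB_singR _ st).
case/(diaB_singR _ st): Ys => [[p Sp tp] | Ut]; last exact/(boxB_singR _ st).
have [_ [_ [_ singE]]] := SDM _ Sp.
have p2s : p.2 s by apply: diaB_boxW_subset; exact/(diaB_singR _ st).
have [p1s _] : (p.1 `&` singR R) s by rewrite singE; split=> //; exists t.
exact: boxB_subset (diaW_S_U _ Sp) _ (subset_boxB_diaW _ _ p1s).
Qed.

End UpperBound.

Lemma boxB_set1_eq0 (reflR : forall y, R y y) {x} :
  ~ singR R x -> boxB R [set x] = set0.
Proof.
move=> xNS; rewrite -subset0 => y yx.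
have y_eq_x : y = x := yx y (reflR y).
subst y; apply: xNS; exists x.
by rewrite eqEsubset; split=> [// | _ ->]; exact: reflR.
Qed.

Lemma compl_join_irr_DMRS_set1 (reflR : forall y, R y y) x :
  ~ singR R x ->
  compl_join_irr (@set_le T) (range (diaB R)) (diaB R [set x]) ->
  compl_join_irr (@pair_le T) (DMRS R) (boxB R [set x], diaB R [set x]).
Proof.
move=> xNS [_ irr_x]; split; first exact: DMRS_boxB_diaB.
move=> S SDM [_ [ubS leastS]].
have box0 := boxB_set1_eq0 reflR xNS.
have [p Sp p2E] : (snd @` S) (diaB R [set x]).
  apply: irr_x; first by move=> _ [p /SDM [_ [p2 _]] <-].
  split; first by exists [set x].
  split=> [_ [p Sp <-] | _ [Y _ <-] ubY]; first exact: (ubS p Sp).2.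
  have ubS_Y p : S p -> pair_le p (boxB R Y, diaB R Y).
    move=> Sp; split; last by apply: ubY; exists p.
    by move=> t /(ubS p Sp).1; rewrite box0.
  exact: (leastS _ (DMRS_boxB_diaB Y) ubS_Y).2.
suff -> : (boxB R [set x], diaB R [set x]) = p by [].
apply: pair_le_anti; last exact: ubS.
by split=> /=; rewrite ?box0 ?p2E.
Qed.

Lemma compl_join_irr_DMRS_diaW_set1 x :
  compl_join_irr (@set_le T) (range (diaW R)) (diaW R [set x]) ->
  compl_join_irr (@pair_le T) (DMRS R)
    (boxB R (diaW R [set x]), diaB R (diaW R [set x])).
Proof.
set D := diaW R [set x].
move=> [_ irr_D]; split; first exact: DMRS_boxB_diaB.
move=> S SDM [_ [ubS leastS]].
have [p Sp p1E] : ((fun p => diaW R p.1) @` S) D.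
  apply: irr_D; first by move=> _ [p _ <-]; exists p.1.
  split; first by exists [set x].
  split=> [_ [p Sp <-] | _ [W _ <-] ubW].
    exact/diaW_subsetP/(ubS p Sp).1.
  have diaW_S_W p : S p -> diaW R p.1 `<=` diaW R W.
    by move=> Sp; apply: ubW; exists p.
  have [jW _] := leastS _ (DMRS_ub_in SDM diaW_S_W) (DMRS_ub_ge SDM diaW_S_W).
  exact/diaW_subsetP/(subset_trans _ jW)/subset_boxB_diaW.
have [[Y _ YE] [_ [diaBW_p _]]] := SDM _ Sp.
suff -> : (boxB R D, diaB R D) = p by [].
apply: pair_le_anti; last exact: ubS.
by split=> /=; rewrite -p1E // -YE boxB_diaW_boxB.
Qed.

End RoughApproximations.

Theorem mainTheorem13 (T : Type) (R : T -> T -> Prop) (reflR : forall x, R x x) (x : T) :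
  ( ~ singR R x ->
    compl_join_irr (@set_le T) (range (diaB R)) (diaB R [set x]) ->
    compl_join_irr (@pair_le T) (DMRS R) (boxB R [set x], diaB R [set x]) ) /\
  ( compl_join_irr (@set_le T) (range (diaW R)) (diaW R [set x]) ->
    compl_join_irr (@pair_le T) (DMRS R)
      (boxB R (diaW R [set x]), diaB R (diaW R [set x])) ).
Proof.
split; first exact: compl_join_irr_DMRS_set1.
exact: compl_join_irr_DMRS_diaW_set1.
Qed.
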